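(* Assume (A1)–(A4) and $\eta_x,\eta_z>0$ (see context). Then for all $K\ge1$ there exists $j\in[K]$ such that $$\pi^j\le\sqrt{\frac{2(\Phi^1-\hat\Phi)}{\theta}\left(1+\frac{2(\theta+\tau_z)^2}{K\eta_z\rho}\right)}.$$
   Context: Let $T\ge1$, $[T]=\{1,\dots,T\}$; for $t\in[T]$: $X_t\subseteq\mathbb{R}^{n_t}$, $f_t:\mathbb{R}^{n_t}\to\mathbb{R}$, $A_t\in\mathbb{R}^{m\times n_t}$; $b\in\mathbb{R}^m$; $X=\prod_tX_t$, $A=[A_1\cdots A_T]$, $Ax=\sum_tA_tx_t$, $A_{\neq t}x_{\neq t}=\sum_{s\neq t}A_sx_s$; $\|w\|_M=\sqrt{w^\top Mw}$. Assumptions: (A1) $X_t$ nonempty compact; (A2) $f_t$ is $C^2$; (A3) $A$ full row rank; (A4) $\{x\in X:Ax=b\}\neq\emptyset$. Parameters $\rho,\theta,\tau_x,\tau_z>0$ with $\eta_x:=\frac{\tau_x}{4}-\frac{(T-1)\rho}{2}>0$, $\eta_z:=\frac{\tau_z}{4}-\frac{2(\theta+\tau_z)^2}{\rho}>0$. $\mathcal{L}(x,z,\lambda)=\sum_tf_t(x_t)+\frac{\theta}{2}\|z\|^2+\lambda^\top(Ax+z-b)+\frac{\rho}{2}\|Ax+z-b\|^2$. Jacobi scheme: given $x^0\in X$, $z^0,\lambda^0\in\mathbb{R}^m$, for $k\ge1$: (i) for each $t$, $x_t^k$ is a local minimizer, computed by a solver warm-started at $x_t^{k-1}$ (so that its subproblem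 objective does not exceed that of $x_t^{k-1}$), of $\min_{x_t\in X_t}f_t(x_t)+(\lambda^{k-1})^\top A_tx_t+\frac{\rho}{2}\|A_tx_t+A_{\neq t}x^{k-1}_{\neq t}+z^{k-1}-b\|^2+\frac{\tau_x}{2}\|x_t-x_t^{k-1}\|^2_{A_t^\top A_t}$; (ii) $z^k=(\tau_zz^{k-1}-\rho(Ax^k-b)-\lambda^{k-1})/(\tau_z+\rho+\theta)$; (iii) $\lambda^k=\lambda^{k-1}+\rho(Ax^k+z^k-b)$. $\Phi(x,z,\lambda,\hat x,\hat z)=\mathcal{L}(x,z,\lambda)+\frac{\tau_z}{4}\|z-\hat z\|^2+\sum_t\frac{\tau_x}{4}\|x_t-\hat x_t\|^2_{A_t^\top A_t}$; $\Phi^1=\Phi(x^1,z^1,\lambda^1,x^0,z^0)$; $\hat\Phi=\min_{x\in X}\sum_tf_t(x_t)$; $\pi^k=\|Ax^k-b\|$. *)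

From HB Require Import structures.
From mathcomp Require Import all_boot all_order all_algebra.
From mathcomp Require Import all_classical all_reals all_analysis.
Unset Printing Implicit Defensive.
Import Order.TTheory GRing.Theory Num.Theory.
Import numFieldNormedType.Exports.
Local Open Scope classical_set_scope.
Local Open Scope ring_scope.

Definition sqnorm {R : realType} {k : nat} (w : 'cV[R]_k) : R :=
  \sum_(i < k) (w i 0) ^+ 2.

Definition enorm {R : realType} {k : nat} (w : 'cV[R]_k) : R :=
  Num.sqrt (sqnorm w).

Definition dotv {R : realType} {k : nat} (u v : 'cV[R]_k) : R :=
  \sum_(i < k) u i 0 * v i 0.

Definition Ax {R : realType} {T m : nat} {n : 'I_T -> nat}
  (A : forall t : 'I_T, 'M[R]_(m, n t)) (x : forall t : 'I_T, 'cV[R]_(n t))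
  : 'cV[R]_m := \sum_(t < T) A t *m x t.

Definition Ax_neq {R : realType} {T m : nat} {n : 'I_T -> nat}
  (A : forall t : 'I_T, 'M[R]_(m, n t)) (x : forall t : 'I_T, 'cV[R]_(n t))
  (t : 'I_T) : 'cV[R]_m := \sum_(s < T | s != t) A s *m x s.

Definition ebasis {R : realType} {k : nat} (i : 'I_k) : 'cV[R]_k := delta_mx i 0.

Definition C2 {R : realType} {k : nat} (f : 'cV[R]_k -> R) : Prop :=
  continuous f /\
  (forall (i : 'I_k) (x : 'cV[R]_k), derivable f x (ebasis i)) /\
  (forall i : 'I_k, continuous (fun y => 'D_(ebasis i) f y)) /\
  (forall (i j : 'I_k) (x : 'cV[R]_k),
      derivable (fun y => 'D_(ebasis i) f y) x (ebasis j)) /\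
  (forall i j : 'I_k,
      continuous (fun y => 'D_(ebasis j) (fun u => 'D_(ebasis i) f u) y)).

Definition Lagr {R : realType} {T m : nat} {n : 'I_T -> nat}
  (f : forall t : 'I_T, 'cV[R]_(n t) -> R)
  (A : forall t : 'I_T, 'M[R]_(m, n t)) (b : 'cV[R]_m) (rho theta : R)
  (x : forall t : 'I_T, 'cV[R]_(n t)) (z lam : 'cV[R]_m) : R :=
  \sum_(t < T) f t (x t) + theta / 2 * sqnorm z
  + dotv lam (Ax A x + z - b) + rho / 2 * sqnorm (Ax A x + z - b).

(* Lyapunov function Phi(x,z,lambda,xhat,zhat);
   ||w||^2_{A_t^T A_t} = w^T A_t^T A_t w = ||A_t w||^2 *)
Definition Phi {R : realType} {T m : nat} {n : 'I_T -> nat}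
  (f : forall t : 'I_T, 'cV[R]_(n t) -> R)
  (A : forall t : 'I_T, 'M[R]_(m, n t)) (b : 'cV[R]_m)
  (rho theta tau_x tau_z : R)
  (x : forall t : 'I_T, 'cV[R]_(n t)) (z lam : 'cV[R]_m)
  (xh : forall t : 'I_T, 'cV[R]_(n t)) (zh : 'cV[R]_m) : R :=
  Lagr f A b rho theta x z lam + tau_z / 4 * sqnorm (z - zh)
  + \sum_(t < T) tau_x / 4 * sqnorm (A t *m (x t - xh t)).

(* objective of the t-th x-subproblem at iteration k, given previous
   iterates xp = x^{k-1}, zp = z^{k-1}, lp = lambda^{k-1} *)
Definition xsub {R : realType} {T m : nat} {n : 'I_T -> nat}
  (f : forall t : 'I_T, 'cV[R]_(n t) -> R)
  (A : forall t : 'I_T, 'M[R]_(m, n t)) (b : 'cV[R]_m) (rho tau_x : R)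
  (xp : forall t : 'I_T, 'cV[R]_(n t)) (zp lp : 'cV[R]_m)
  (t : 'I_T) (y : 'cV[R]_(n t)) : R :=
  f t y + dotv lp (A t *m y)
  + rho / 2 * sqnorm (A t *m y + Ax_neq A xp t + zp - b)
  + tau_x / 2 * sqnorm (A t *m (y - xp t)).

From HB Require Import structures.
From mathcomp Require Import all_boot all_order all_algebra.
From mathcomp Require Import all_classical all_reals all_analysis.
From mathcomp Require Import ring lra.
Import Order.TTheory GRing.Theory Num.Theory.
Import numFieldNormedType.Exports.
Local Open Scope classical_set_scope.
Local Open Scope ring_scope.

(** The z-update minimises a strongly convex quadratic exactly, and its optimality
    condition combined with the multiplier update gives
    λ^k = -θ z^k - τ_z (z^k - z^{k-1}).  With this identity the Lyapunov function
    Φ^k = Φ(x^k, z^k, λ^k, x^{k-1}, z^{k-1}) is nonincreasing: the warm-started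
    x-step lowers the augmented Lagrangian by (ρ + τ_x)/2 Σ_t ‖A_t Δx_t‖², the
    coupling ρ/2 ‖Σ_t A_t Δx_t‖² ≤ Tρ/2 Σ_t ‖A_t Δx_t‖² is absorbed thanks to η_x > 0,
    and the (z, λ)-step costs at most its linearisation because η_z > 0.  The same
    identity and ρ ≥ θ + 2τ_z give Φ^k ≥ Σ_t f_t(x^k_t) + θ/2 (π^k)² ≥ Φ̂ + θ/2 (π^k)².
    Hence (π^j)² ≤ 2(Φ^1 - Φ̂)/θ for every j ≥ 1, which is stronger than the claim
    (take j = K). *)

Lemma sqr_sum_le_card {R : realFieldType} (T : nat) (d : 'I_T -> R) :
  (\sum_t d t) ^+ 2 <= T%:R * \sum_t d t ^+ 2.
Proof.
have -> : (\sum_t d t) ^+ 2 = \sum_s \sum_t d s * d t.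
  by rewrite expr2 mulr_suml; apply: eq_bigr => s _; rewrite mulr_sumr.
have <- : \sum_s \sum_t (d s ^+ 2 + d t ^+ 2) / 2 = T%:R * \sum_t d t ^+ 2.
  under eq_bigr do rewrite -mulr_suml big_split /= sumr_const card_ord.
  rewrite -mulr_suml big_split /= sumr_const card_ord.
  by rewrite sumrMnl -mulr_natl; field.
apply: ler_sum => s _; apply: ler_sum => t _.
have := sqr_ge0 (d s - d t); rewrite !expr2; lra.
Qed.

Section CoordinateMerit.
Context {R : realFieldType}.
Variables (rho theta tau_z : R).

(* Coordinate of the (z, λ)-dependent part of Φ, with [a] standing for (Ax)_i. *)
Definition psi (b a z lam zh : R) : R :=
  theta / 2 * z ^+ 2 + lam * (a + z - b) + rho / 2 * (a + z - b) ^+ 2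
  + tau_z / 4 * (z - zh) ^+ 2.

Lemma eta_z_gt0_lt :
  0 < rho -> 0 < tau_z / 4 - 2 * (theta + tau_z) ^+ 2 / rho ->
  8 * (theta + tau_z) ^+ 2 < rho * tau_z.
Proof. by move=> rho_gt0; rewrite subr_gt0 ltr_pdivrMr // => ?; lra. Qed.

Lemma theta_2tau_z_le_rho :
  0 < rho -> 0 < theta -> 0 < tau_z ->
  0 < tau_z / 4 - 2 * (theta + tau_z) ^+ 2 / rho ->
  theta + 2 * tau_z <= rho.
Proof.
move=> rho_gt0 theta_gt0 tau_z_gt0 /(eta_z_gt0_lt rho_gt0) eta_z.
have sq_ge : (theta + tau_z) * tau_z <= (theta + tau_z) ^+ 2.
  by rewrite expr2; apply: ler_wpM2l; lra.
have : 8 * (theta + tau_z) < rho by rewrite -(ltr_pM2r tau_z_gt0); lra.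
lra.
Qed.

(* Optimality condition of the z-subproblem. *)
Lemma zstep_multiplier (b a' z z' lam lam' : R) :
  0 < rho -> 0 < theta -> 0 < tau_z ->
  z' = (tau_z * z - rho * (a' - b) - lam) / (tau_z + rho + theta) ->
  lam' = lam + rho * (a' + z' - b) ->
  lam' = - (theta * z') - tau_z * (z' - z).
Proof. by move=> *; subst; field; lra. Qed.

Lemma psi_ge_residual (b a z lam zh : R) :
  0 < rho -> 0 < theta -> 0 < tau_z ->
  0 < tau_z / 4 - 2 * (theta + tau_z) ^+ 2 / rho ->
  lam = - (theta * z) - tau_z * (z - zh) ->
  theta / 2 * (a - b) ^+ 2 <= psi b a z lam zh.
Proof.
move=> rho_gt0 theta_gt0 tau_z_gt0 eta_z lamE.
have rho_ge := theta_2tau_z_le_rho rho_gt0 theta_gt0 tau_z_gt0 eta_z.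
rewrite -subr_ge0.
have -> : psi b a z lam zh - theta / 2 * (a - b) ^+ 2
  = (rho - theta - 2 * tau_z) / 2 * (a + z - b) ^+ 2
    + tau_z * ((z - zh) / 2 - (a + z - b)) ^+ 2.
  by rewrite /psi lamE; field.
by apply: addr_ge0; apply: mulr_ge0; rewrite ?sqr_ge0 //; lra.
Qed.

Lemma sqr_zstep_cross_le (al be : R) :
  0 < rho -> 0 < theta -> 0 < tau_z -> 8 * (theta + tau_z) ^+ 2 < rho * tau_z ->
  ((theta + tau_z) * al - tau_z * be) ^+ 2
  <= (3 * tau_z / 4 + (theta + rho) / 2) * rho * al ^+ 2 + rho * tau_z / 4 * be ^+ 2.
Proof.
move=> rho_gt0 theta_gt0 tau_z_gt0 eta_z.
have cross : ((theta + tau_z) * al - tau_z * be) ^+ 2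
    <= 2 * (theta + tau_z) ^+ 2 * al ^+ 2 + 2 * tau_z ^+ 2 * be ^+ 2.
  by have := sqr_ge0 ((theta + tau_z) * al + tau_z * be); rewrite !expr2; lra.
have al_coef : 2 * (theta + tau_z) ^+ 2 <= (3 * tau_z / 4 + (theta + rho) / 2) * rho.
  have : 0 <= rho * (theta + rho + tau_z) by rewrite mulr_ge0 //; lra.
  lra.
have be_coef : 2 * tau_z ^+ 2 <= rho * tau_z / 4.
  have : tau_z ^+ 2 <= (theta + tau_z) ^+ 2 by rewrite ler_sqr ?nnegrE; lra.
  lra.
by apply: (le_trans cross); apply: lerD; rewrite ler_wpM2r ?sqr_ge0.
Qed.

Lemma psi_step_le (b a a' z z' zh lam lam' : R) :
  0 < rho -> 0 < theta -> 0 < tau_z ->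
  0 < tau_z / 4 - 2 * (theta + tau_z) ^+ 2 / rho ->
  z' = (tau_z * z - rho * (a' - b) - lam) / (tau_z + rho + theta) ->
  lam = - (theta * z) - tau_z * (z - zh) ->
  lam' = lam + rho * (a' + z' - b) ->
  psi b a' z' lam' z - psi b a z lam zh
  <= (lam + rho * (a + z - b)) * (a' - a) + rho / 2 * (a' - a) ^+ 2.
Proof.
move=> rho_gt0 theta_gt0 tau_z_gt0 eta_z z'E lamE lam'E.
rewrite -subr_ge0 -(pmulr_rge0 _ rho_gt0).
have -> : rho * ((lam + rho * (a + z - b)) * (a' - a) + rho / 2 * (a' - a) ^+ 2
                 - (psi b a' z' lam' z - psi b a z lam zh))
  = (3 * tau_z / 4 + (theta + rho) / 2) * rho * (z' - z) ^+ 2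
    + rho * tau_z / 4 * (z - zh) ^+ 2
    - ((theta + tau_z) * (z' - z) - tau_z * (z - zh)) ^+ 2.
  have a'E : a' = (tau_z * z - lam - (tau_z + rho + theta) * z') / rho + b.
    by rewrite z'E; field; lra.
  by rewrite /psi lam'E a'E lamE; field; lra.
by rewrite subr_ge0 sqr_zstep_cross_le // eta_z_gt0_lt.
Qed.

End CoordinateMerit.

Section Norms.
Context {R : realType}.

Lemma sqnorm_ge0 {k} (w : 'cV[R]_k) : 0 <= sqnorm w.
Proof. by apply: sumr_ge0 => i _; exact: sqr_ge0. Qed.

Lemma dotv_sumr k T (u : 'cV[R]_k) (v : 'I_T -> 'cV[R]_k) :
  dotv u (\sum_t v t) = \sum_t dotv u (v t).
Proof.
rewrite /dotv exchange_big; apply: eq_bigr => i _.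
by rewrite summxE mulr_sumr.
Qed.

Lemma sqnorm_sum_le k T (v : 'I_T -> 'cV[R]_k) :
  sqnorm (\sum_t v t) <= T%:R * \sum_t sqnorm (v t).
Proof.
rewrite /sqnorm exchange_big mulr_sumr; apply: ler_sum => i _.
by rewrite summxE; exact: sqr_sum_le_card.
Qed.

End Norms.

Section Splitting.
Context {R : realType} {T m : nat} {n : 'I_T -> nat}.
Variables (f : forall t : 'I_T, 'cV[R]_(n t) -> R)
  (A : forall t : 'I_T, 'M[R]_(m, n t)) (b : 'cV[R]_m).
Implicit Types (x : forall t : 'I_T, 'cV[R]_(n t)) (z lam : 'cV[R]_m).

Lemma Ax_sub x x' : Ax A x' - Ax A x = \sum_t A t *m (x' t - x t).
Proof. by rewrite /Ax -sumrB; apply: eq_bigr => t _; rewrite mulmxBr. Qed.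

Lemma Ax_neqE x t : Ax_neq A x t = Ax A x - A t *m x t.
Proof. by rewrite /Ax_neq /Ax [in RHS](bigD1 t) //= addrAC subrr add0r. Qed.

Lemma xsub_sub_warm (rho tau_x : R) xp zp lp t (y : 'cV[R]_(n t)) :
  xsub f A b rho tau_x xp zp lp t y - xsub f A b rho tau_x xp zp lp t (xp t)
  = f t y - f t (xp t)
    + dotv (lp + rho *: (Ax A xp + zp - b)) (A t *m (y - xp t))
    + (rho + tau_x) / 2 * sqnorm (A t *m (y - xp t)).
Proof.
have xsubE (y' : 'cV[R]_(n t)) : xsub f A b rho tau_x xp zp lp t y'
  = f t y' + \sum_i (lp i 0 * (A t *m y') i 0
      + rho / 2 * ((A t *m y') i 0 + Ax A xp i 0 - (A t *m xp t) i 0 + zp i 0 - b i 0) ^+ 2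
      + tau_x / 2 * ((A t *m y') i 0 - (A t *m xp t) i 0) ^+ 2).
  rewrite /xsub /dotv /sqnorm Ax_neqE mulmxBr !mulr_sumr -!addrA -!big_split /=.
  by congr (_ + _); apply: eq_bigr => i _; rewrite !mxE !addrA.
rewrite !xsubE opprD addrACA -sumrB /dotv /sqnorm mulmxBr mulr_sumr.
rewrite -[RHS]addrA -big_split /=; congr (_ + _); apply: eq_bigr => i _.
by rewrite !mxE; field.
Qed.

Lemma Phi_split (rho theta tau_x tau_z : R) x z lam xh zh :
  Phi f A b rho theta tau_x tau_z x z lam xh zh =
  \sum_t f t (x t)
  + \sum_i psi rho theta tau_z (b i 0) (Ax A x i 0) (z i 0) (lam i 0) (zh i 0)
  + \sum_t tau_x / 4 * sqnorm (A t *m (x t - xh t)).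
Proof.
have -> : \sum_i psi rho theta tau_z (b i 0) (Ax A x i 0) (z i 0) (lam i 0) (zh i 0)
  = theta / 2 * sqnorm z + dotv lam (Ax A x + z - b)
    + rho / 2 * sqnorm (Ax A x + z - b) + tau_z / 4 * sqnorm (z - zh).
  rewrite /psi /sqnorm /dotv !mulr_sumr -!big_split /=.
  by apply: eq_bigr => i _; rewrite !mxE.
rewrite /Phi /Lagr; lra.
Qed.

End Splitting.

Section JacobiIterates.
Context {R : realType} {T m : nat} {n : 'I_T -> nat}.
Context {f : forall t : 'I_T, 'cV[R]_(n t) -> R}
  {A : forall t : 'I_T, 'M[R]_(m, n t)} {b : 'cV[R]_m} {rho theta tau_x tau_z : R}.
Context {xs : nat -> forall t : 'I_T, 'cV[R]_(n t)} {zs lams : nat -> 'cV[R]_m}.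
Hypotheses (rho_gt0 : 0 < rho) (theta_gt0 : 0 < theta)
  (tau_x_gt0 : 0 < tau_x) (tau_z_gt0 : 0 < tau_z).
Hypothesis eta_x_gt0 : 0 < tau_x / 4 - (T%:R - 1) * rho / 2.
Hypothesis eta_z_gt0 : 0 < tau_z / 4 - 2 * (theta + tau_z) ^+ 2 / rho.
Hypothesis xs_warm : forall k t,
  xsub f A b rho tau_x (xs k) (zs k) (lams k) t (xs k.+1 t)
  <= xsub f A b rho tau_x (xs k) (zs k) (lams k) t (xs k t).
Hypothesis zs_step : forall k,
  zs k.+1 = (tau_z + rho + theta)^-1
            *: (tau_z *: zs k - rho *: (Ax A (xs k.+1) - b) - lams k).
Hypothesis lams_step : forall k,
  lams k.+1 = lams k + rho *: (Ax A (xs k.+1) + zs k.+1 - b).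

(* [Phi_iter k] is Φ^{k+1} in the paper's indexing. *)
Let Phi_iter k :=
  Phi f A b rho theta tau_x tau_z (xs k.+1) (zs k.+1) (lams k.+1) (xs k) (zs k).

Lemma zs_step_coord k i :
  zs k.+1 i 0 = (tau_z * zs k i 0 - rho * (Ax A (xs k.+1) i 0 - b i 0) - lams k i 0)
                / (tau_z + rho + theta).
Proof. by rewrite zs_step !mxE mulrC. Qed.

Lemma lams_step_coord k i :
  lams k.+1 i 0 = lams k i 0 + rho * (Ax A (xs k.+1) i 0 + zs k.+1 i 0 - b i 0).
Proof. by rewrite lams_step !mxE. Qed.

Lemma lams_multiplier k i :
  lams k.+1 i 0 = - (theta * zs k.+1 i 0) - tau_z * (zs k.+1 i 0 - zs k i 0).
Proof.
exact: zstep_multiplier rho_gt0 theta_gt0 tau_z_gt0 (zs_step_coord k i)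
  (lams_step_coord k i).
Qed.

Lemma prox_ge0 (x xh : forall t : 'I_T, 'cV[R]_(n t)) :
  0 <= \sum_t tau_x / 4 * sqnorm (A t *m (x t - xh t)).
Proof.
by apply: sumr_ge0 => t _; rewrite mulr_ge0 ?sqnorm_ge0 // divr_ge0 // ltW.
Qed.

Lemma Phi_iter_ge_residual k :
  \sum_t f t (xs k.+1 t) + theta / 2 * sqnorm (Ax A (xs k.+1) - b) <= Phi_iter k.
Proof.
rewrite /Phi_iter Phi_split -addrA lerD2l -[leLHS]addr0 lerD ?prox_ge0 //.
rewrite /sqnorm mulr_sumr; apply: ler_sum => i _; rewrite !mxE.
exact: psi_ge_residual rho_gt0 theta_gt0 tau_z_gt0 eta_z_gt0 (lams_multiplier k i).
Qed.

Lemma Phi_iter_succ_le k : Phi_iter k.+1 <= Phi_iter k.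
Proof.
set D := Ax A (xs k.+2) - Ax A (xs k.+1).
set w := lams k.+1 + rho *: (Ax A (xs k.+1) + zs k.+1 - b).
set S := \sum_t sqnorm (A t *m (xs k.+2 t - xs k.+1 t)).
have x_gain : \sum_t f t (xs k.+2 t) - \sum_t f t (xs k.+1 t)
              + dotv w D + (rho + tau_x) / 2 * S <= 0.
  have : \sum_t (xsub f A b rho tau_x (xs k.+1) (zs k.+1) (lams k.+1) t (xs k.+2 t)
                 - xsub f A b rho tau_x (xs k.+1) (zs k.+1) (lams k.+1) t (xs k.+1 t))
         <= 0.
    by apply: sumr_le0 => t _; rewrite subr_le0 xs_warm.
  under eq_bigr do rewrite xsub_sub_warm.
  by rewrite !big_split /= sumrN -dotv_sumr -Ax_sub -mulr_sumr.
have zl_gain :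
    \sum_i psi rho theta tau_z (b i 0) (Ax A (xs k.+2) i 0) (zs k.+2 i 0)
             (lams k.+2 i 0) (zs k.+1 i 0)
  - \sum_i psi rho theta tau_z (b i 0) (Ax A (xs k.+1) i 0) (zs k.+1 i 0)
             (lams k.+1 i 0) (zs k i 0)
  <= dotv w D + rho / 2 * sqnorm D.
  rewrite -sumrB /dotv /sqnorm mulr_sumr -big_split; apply: ler_sum => i _.
  rewrite !mxE; apply: psi_step_le rho_gt0 theta_gt0 tau_z_gt0 eta_z_gt0
    (zs_step_coord k.+1 i) (lams_multiplier k i) (lams_step_coord k.+1 i).
have cs : rho / 2 * sqnorm D <= rho / 2 * (T%:R * S).
  apply: ler_wpM2l; first by rewrite divr_ge0 // ltW.
  by rewrite /D Ax_sub; exact: sqnorm_sum_le.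
have eta_S : 0 <= (tau_x / 4 - (T%:R - 1) * rho / 2) * S.
  by apply: mulr_ge0; [exact: ltW | apply: sumr_ge0 => t _; exact: sqnorm_ge0].
have := prox_ge0 (xs k.+1) (xs k).
rewrite /Phi_iter !Phi_split -!mulr_sumr -/S; lra.
Qed.

Lemma Phi_iter_le_first k : Phi_iter k <= Phi_iter 0.
Proof. by elim: k => // k IH; exact: le_trans (Phi_iter_succ_le k) IH. Qed.

End JacobiIterates.

Theorem proposition1 (R : realType) (T m : nat) (n : 'I_T -> nat)
  (X : forall t : 'I_T, set 'cV[R]_(n t))
  (f : forall t : 'I_T, 'cV[R]_(n t) -> R)
  (A : forall t : 'I_T, 'M[R]_(m, n t)) (b : 'cV[R]_m)
  (rho theta tau_x tau_z : R)
  (xs : nat -> forall t : 'I_T, 'cV[R]_(n t)) (zs lams : nat -> 'cV[R]_m)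
  (Phihat : R) :
  (0 < T)%N ->
  (* (A1) *)
  (forall t, X t !=set0 /\ compact (X t)) ->
  (* (A2) *)
  (forall t, C2 (f t)) ->
  (* (A3) A = [A_1 ... A_T] has full row rank *)
  row_free (\mxrow_(t < T) A t) ->
  (* (A4) *)
  (exists x : forall t : 'I_T, 'cV[R]_(n t),
      (forall t, X t (x t)) /\ Ax A x = b) ->
  (* parameters *)
  0 < rho -> 0 < theta -> 0 < tau_x -> 0 < tau_z ->
  0 < tau_x / 4 - (T%:R - 1) * rho / 2 ->
  0 < tau_z / 4 - 2 * (theta + tau_z) ^+ 2 / rho ->
  (* x^0 in X *)
  (forall t, X t (xs 0%N t)) ->
  (* (i) x-update: feasible local minimizer, no worse than warm start *)
  (forall (k : nat) (t : 'I_T), (1 <= k)%N ->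
     X t (xs k t) /\
     (\forall y \near xs k t, X t y ->
        xsub f A b rho tau_x (xs k.-1) (zs k.-1) (lams k.-1) t (xs k t)
        <= xsub f A b rho tau_x (xs k.-1) (zs k.-1) (lams k.-1) t y) /\
     xsub f A b rho tau_x (xs k.-1) (zs k.-1) (lams k.-1) t (xs k t)
     <= xsub f A b rho tau_x (xs k.-1) (zs k.-1) (lams k.-1) t (xs k.-1 t)) ->
  (* (ii) z-update *)
  (forall k : nat, (1 <= k)%N ->
     zs k = (tau_z + rho + theta)^-1
            *: (tau_z *: zs k.-1 - rho *: (Ax A (xs k) - b) - lams k.-1)) ->
  (* (iii) multiplier update *)
  (forall k : nat, (1 <= k)%N ->
     lams k = lams k.-1 + rho *: (Ax A (xs k) + zs k - b)) ->
  (* Phihat = min_{x in X} sum_t f_t(x_t) *)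
  ((exists x : forall t : 'I_T, 'cV[R]_(n t),
      (forall t, X t (x t)) /\ \sum_(t < T) f t (x t) = Phihat) /\
   (forall x : forall t : 'I_T, 'cV[R]_(n t),
      (forall t, X t (x t)) -> Phihat <= \sum_(t < T) f t (x t))) ->
  forall K : nat, (1 <= K)%N ->
  exists j : nat, (1 <= j <= K)%N /\
    enorm (Ax A (xs j) - b)
    <= Num.sqrt (2 * (Phi f A b rho theta tau_x tau_z
                        (xs 1%N) (zs 1%N) (lams 1%N) (xs 0%N) (zs 0%N)
                      - Phihat) / theta
                 * (1 + 2 * (theta + tau_z) ^+ 2
                        / (K%:R * (tau_z / 4 - 2 * (theta + tau_z) ^+ 2 / rho) * rho))).
Proof.
move=> _ _ _ _ _ rho_gt0 theta_gt0 tau_x_gt0 tau_z_gt0 eta_x_gt0 eta_z_gt0 _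
  xstep zstep lamstep [_ Phihat_min] [//|K] _.
move: (fun k t => (xstep k.+1 t erefl).2.2) => /= xs_warm.
move: (fun k => zstep k.+1 erefl) (fun k => lamstep k.+1 erefl) => /= zs_step lams_step.
have Phi_le := Phi_iter_le_first rho_gt0 theta_gt0 tau_x_gt0 tau_z_gt0 eta_x_gt0
  eta_z_gt0 xs_warm zs_step lams_step K.
have Phi_ge := Phi_iter_ge_residual (f := f) rho_gt0 theta_gt0 tau_x_gt0 tau_z_gt0 eta_z_gt0
  zs_step lams_step K.
have f_ge : Phihat <= \sum_t f t (xs K.+1 t).
  by apply: Phihat_min => t; exact: (xstep K.+1 t erefl).1.
exists K.+1; split; first by rewrite leqnn.
set Phi1 := Phi _ _ _ _ _ _ _ _ _ _ (xs 0%N) _ in Phi_le *.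
have res_le : sqnorm (Ax A (xs K.+1) - b) <= 2 * (Phi1 - Phihat) / theta.
  by rewrite ler_pdivlMr //; lra.
have slack_ge0 : 0 <= 2 * (theta + tau_z) ^+ 2
                      / (K.+1%:R * (tau_z / 4 - 2 * (theta + tau_z) ^+ 2 / rho) * rho).
  apply: divr_ge0; first by rewrite mulr_ge0 ?sqr_ge0.
  by rewrite !mulr_ge0 ?ler0n // ltW.
rewrite /enorm; apply: ler_wsqrtr; apply: (le_trans res_le); apply: ler_peMr.
  exact: le_trans (sqnorm_ge0 _) res_le.
by rewrite lerDl.
Qed.
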